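(* Let $g:\{0,1\}^n\to\{0,1\}^{n+1}$ be a super-bit, and define $f(x)=g(x)[1\ldots n]$ and $b(x)=g(x)[n+1]$ (so $g(x)=f(x)b(x)$). Then $b$ is a super-core of $f$, and $f$ is computable by polynomial-size circuits.
   Context: $U_k$ is uniform on $\{0,1\}^k$. A generator $g:\{0,1\}^n\to\{0,1\}^{n+1}$ computable by polynomial-size circuits is a super-bit if for every nondeterministic polynomial-size circuit family $D$ (accepting iff some witness gives output 1), every polynomial $p$ and all sufficiently large $n$, $\Pr[D(U_{n+1})=1]-\Pr[D(g(U_n))=1]<1/p(n)$. A predicate $b$ computable by polynomial-size circuits is a super-core of $f:\{0,1\}^n\to\{0,1\}^{m(n)}$ if there do not exist a nondeterministic polynomial-size circuit family $\mathcal{A}_1$, a co-nondeterministic polynomial-size circuit family $\mathcal{A}_2$ (rejecting iff some witness gives output 0), a polynomial $p$ and infinitely many $n$ such that either $\Pr_{x\in\{0,1\}^n}[\mathcal{A}_1(f(x),1^n)=b(x)=0]+\tfrac12\Pr_{y\in\{0,1\}^{m(n)}}[\mathcal{A}_1(y,1^n)=1]\ge \tfrac12+\tfrac1{p(n)}$ or $\Pr_{x}[\mathcal{A}_2(f(x),1^n)=b(x)=1]+\tfrac12\Pr_{y}[\mathcal{A}_2(y,1^n)=0]\ge \tfrac12+\tfrac1{p(n)}$. *)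

From mathcomp Require Import all_boot all_order all_algebra.
Set Implicit Arguments. Unset Strict Implicit. Unset Printing Implicit Defensive.
Import Order.TTheory GRing.Theory Num.Theory.
Local Open Scope ring_scope.

Definition npoly := seq nat.
Definition peval (p : npoly) (n : nat) : nat :=
  \sum_(i < size p) (nth 0 p i * n ^ i)%N.
(* non-zero polynomial (hence positive for n >= 1) *)
Definition nonzero_poly (p : npoly) : bool := has (fun c => 0 < c)%N p.

(* Wires 0..k-1 are the inputs; the i-th gate defines wire k+i and may refer
   to earlier wires (references to undefined wires read as false). *)
Inductive gate :=
| GConst of bool
| GNot of nat
| GAnd of nat & nat
| GOr of nat & nat.

Record circuit := Circuit { gates : seq gate; outs : seq nat }.

Definition csize (C : circuit) : nat := size (gates C).

Definition gate_val (ws : seq bool) (g : gate) : bool :=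
  match g with
  | GConst b => b
  | GNot i => ~~ nth false ws i
  | GAnd i j => nth false ws i && nth false ws j
  | GOr i j => nth false ws i || nth false ws j
  end.

Definition wires (C : circuit) (x : seq bool) : seq bool :=
  foldl (fun ws g => rcons ws (gate_val ws g)) x (gates C).

Definition ceval (C : circuit) (x : seq bool) : seq bool :=
  map (nth false (wires C x)) (outs C).

Definition cout (C : circuit) (x : seq bool) : bool := head false (ceval C x).

Definition poly_size (C : nat -> circuit) : Prop :=
  exists p : npoly, forall n, (csize (C n) <= peval p n)%N.

Definition poly_computable (k m : nat -> nat)
  (F : forall n, (k n).-tuple bool -> (m n).-tuple bool) : Prop :=
  exists C : nat -> circuit, poly_size C /\
    forall n (x : (k n).-tuple bool), ceval (C n) x = val (F n x).

Arguments poly_computable k m F : clear implicits.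

Definition poly_computable_pred (k : nat -> nat)
  (F : forall n, (k n).-tuple bool -> bool) : Prop :=
  exists C : nat -> circuit, poly_size C /\
    forall n (x : (k n).-tuple bool), cout (C n) x = F n x.

Arguments poly_computable_pred k F : clear implicits.

(* The n-th member takes the actual input followed by a witness of length
   wit n; size and witness length are polynomially bounded. *)
Record ncfam := NCFam { ncirc : nat -> circuit; nwit : nat -> nat }.

Definition poly_ncfam (D : ncfam) : Prop :=
  exists p : npoly, forall n,
    (csize (ncirc D n) <= peval p n)%N /\ (nwit D n <= peval p n)%N.

Definition nd_out (D : ncfam) (n : nat) (x : seq bool) : bool :=
  [exists w : (nwit D n).-tuple bool, cout (ncirc D n) (x ++ w)].

Definition cond_out (D : ncfam) (n : nat) (x : seq bool) : bool :=
  ~~ [exists w : (nwit D n).-tuple bool, ~~ cout (ncirc D n) (x ++ w)].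

Definition prob (k : nat) (P : pred (k.-tuple bool)) : rat :=
  (#|P|)%:R / (2 ^ k)%:R.

Definition super_bit (g : forall n, n.-tuple bool -> n.+1.-tuple bool) : Prop :=
  poly_computable (fun n => n) (fun n => n.+1) g /\
  forall D : ncfam, poly_ncfam D ->
  forall p : npoly, nonzero_poly p ->
  exists N, forall n, (N <= n)%N ->
    prob (fun y : n.+1.-tuple bool => nd_out D n y)
    - prob (fun x : n.-tuple bool => nd_out D n (g n x))
    < 1 / (peval p n)%:R.

Definition super_core (m : nat -> nat)
  (f : forall n, n.-tuple bool -> (m n).-tuple bool)
  (b : forall n, n.-tuple bool -> bool) : Prop :=
  poly_computable_pred (fun n => n) b /\
  ~ exists (A1 A2 : ncfam) (p : npoly),
      [/\ poly_ncfam A1, poly_ncfam A2, nonzero_poly p &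
      forall N, exists n, (N <= n)%N /\
        ( prob (fun x : n.-tuple bool => ~~ nd_out A1 n (f n x) && ~~ b n x)
          + 1 / 2 * prob (fun y : (m n).-tuple bool => nd_out A1 n y)
          >= 1 / 2 + 1 / (peval p n)%:R
        \/
          prob (fun x : n.-tuple bool => cond_out A2 n (f n x) && b n x)
          + 1 / 2 * prob (fun y : (m n).-tuple bool => ~~ cond_out A2 n y)
          >= 1 / 2 + 1 / (peval p n)%:R )].

Arguments super_core m f b : clear implicits.

Definition f_of (g : forall n, n.-tuple bool -> n.+1.-tuple bool)
  (n : nat) (x : n.-tuple bool) : n.-tuple bool :=
  [tuple tnth (g n x) (widen_ord (leqnSn n) i) | i < n].

Definition b_of (g : forall n, n.-tuple bool -> n.+1.-tuple bool)
  (n : nat) (x : n.-tuple bool) : bool :=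
  tnth (g n x) ord_max.

From Pilot Require Import Defs.
From mathcomp Require Import all_boot all_order all_algebra zify ring lra.
Set Implicit Arguments. Unset Strict Implicit. Unset Printing Implicit Defensive.

(* An adversary A1 (nondeterministic) or A2
   (co-nondeterministic) breaking the super-core property is turned into a
   nondeterministic distinguisher for g:
     D1(y c) := A1(y) or c,        D2(y c) := not A2(y) or not c.
   D2 is nondeterministic since "not A2" is.  On a uniform string y c the
   last bit is independent of y, so Pr[D1] = 1/2 + 1/2 Pr[A1], while on g(x)
   we get Pr[D1] = 1 - Pr[not A1(f x) and not b x]; the difference is the
   super-core advantage minus 1/2 (and symmetrically for D2), contradicting
   the super-bit property. *)

Definition step (ws : seq bool) (gt : gate) : seq bool := rcons ws (gate_val ws gt).

Definition relabel (h : nat -> nat) (gt : gate) : gate :=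
  match gt with
  | GConst c => GConst c
  | GNot i => GNot (h i)
  | GAnd i j => GAnd (h i) (h j)
  | GOr i j => GOr (h i) (h j)
  end.

Definition ins (n : nat) (c : bool) (ws : seq bool) : seq bool :=
  take n ws ++ c :: drop n ws.

Lemma size_ins n c ws : size (ins n c ws) = (size ws).+1.
Proof. by rewrite /ins size_cat /= size_take size_drop; case: ltnP; lia. Qed.

Lemma nth_ins_at n c ws : n <= size ws -> nth false (ins n c ws) n = c.
Proof. by move=> le_n; rewrite /ins nth_cat size_takel // ltnn subnn. Qed.

Lemma nth_ins_bump n c ws i :
  n <= size ws -> nth false (ins n c ws) (bump n i) = nth false ws i.
Proof.
move=> le_n; rewrite /ins /bump nth_cat size_takel //.
case: (leqP n i) => [le_ni | lt_in] /=.
- by rewrite ltnNge leqW ?add1n // subSn //= nth_drop subnKC.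
- by rewrite add0n lt_in nth_take.
Qed.

Lemma ins_rcons n c ws v :
  n <= size ws -> ins n c (rcons ws v) = rcons (ins n c ws) v.
Proof.
by move=> le_n; rewrite /ins drop_rcons // -!cats1 takel_cat // -catA.
Qed.

Lemma foldl_step_ins n c ws gs : n <= size ws ->
  foldl step (ins n c ws) (map (relabel (bump n)) gs) = ins n c (foldl step ws gs).
Proof.
elim: gs ws => [|gt gs IH] ws le_n //=.
have -> : step (ins n c ws) (relabel (bump n) gt) = ins n c (step ws gt).
  rewrite /step ins_rcons //; congr rcons.
  by case: gt => * /=; rewrite ?nth_ins_bump.
by apply: IH; rewrite size_rcons leqW.
Qed.

Lemma size_foldl_step ws gs : size (foldl step ws gs) = size ws + size gs.
Proof.
elim: gs ws => [|gt gs IH] ws /=; first by rewrite addn0.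
by rewrite IH size_rcons addSnnS.
Qed.

Lemma size_wires C x : size (wires C x) = size x + csize C.
Proof. exact: size_foldl_step. Qed.

(* The output bit is a wire, or an out-of-range (hence false) wire when the
   circuit has no outputs. *)
Lemma cout_nth C x :
  cout C x = nth false (wires C x) (head (size x + csize C) (outs C)).
Proof.
by rewrite /cout /ceval; case: (outs C) => [|o os] //=; rewrite nth_default ?size_wires.
Qed.

(* The gates of C, reading its input y w from y c w (c inserted at n). *)
Definition lift_gates (n : nat) (C : circuit) : seq gate :=
  map (relabel (bump n)) (gates C).

Definition lift_out (n k : nat) (C : circuit) : nat :=
  bump n (head (n + k + csize C) (outs C)).

Definition lift_top (n k : nat) (C : circuit) : nat := n.+1 + k + csize C.

Lemma lift_wires n C (y w : seq bool) c : size y = n ->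
  let L := foldl step (y ++ c :: w) (lift_gates n C) in
  [/\ size L = lift_top n (size w) C, nth false L n = c
    & nth false L (lift_out n (size w) C) = cout C (y ++ w)].
Proof.
move=> size_y L.
have le_n : n <= size (wires C (y ++ w)) by rewrite size_wires size_cat; lia.
have -> : L = ins n c (wires C (y ++ w)).
  rewrite /L; have -> : y ++ c :: w = ins n c (y ++ w).
    by rewrite /ins take_cat drop_cat size_y ltnn subnn take0 drop0 cats0.
  by apply: foldl_step_ins; rewrite size_cat; lia.
split; first by rewrite size_ins size_wires size_cat /lift_top; lia.
- exact: nth_ins_at.
- by rewrite nth_ins_bump // cout_nth size_cat size_y.
Qed.

Definition or_circ (n k : nat) (C : circuit) : circuit :=
  Circuit (rcons (lift_gates n C) (GOr (lift_out n k C) n)) [:: lift_top n k C].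

Definition nand_circ (n k : nat) (C : circuit) : circuit :=
  Circuit (lift_gates n C ++ [:: GAnd (lift_out n k C) n; GNot (lift_top n k C)])
    [:: (lift_top n k C).+1].

Lemma or_circ_out n C (y w : seq bool) c : size y = n ->
  cout (or_circ n (size w) C) (y ++ c :: w) = cout C (y ++ w) || c.
Proof.
move=> /(@lift_wires n C y w c) [size_L nth_n nth_o].
rewrite /cout /ceval /wires /= -/step foldl_rcons /step.
by rewrite nth_rcons size_L ltnn eqxx /= nth_n nth_o.
Qed.

Lemma nand_circ_out n C (y w : seq bool) c : size y = n ->
  cout (nand_circ n (size w) C) (y ++ c :: w) = ~~ (cout C (y ++ w) && c).
Proof.
move=> /(@lift_wires n C y w c) [size_L nth_n nth_o].
rewrite /cout /ceval /wires /= -/step foldl_cat /= /step !nth_rcons !size_rcons size_L.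
by rewrite ltnn eqxx /= nth_rcons size_L ltnn eqxx nth_n nth_o.
Qed.

Lemma csize_or_circ n k C : csize (or_circ n k C) = (csize C).+1.
Proof. by rewrite {1}/csize /= size_rcons size_map. Qed.

Lemma csize_nand_circ n k C : csize (nand_circ n k C) = (csize C).+2.
Proof. by rewrite {1}/csize /= size_cat size_map addn2. Qed.

Lemma peval_cons a p n : peval (a :: p) n = a + n * peval p n.
Proof.
rewrite /peval /= big_ord_recl /= expn0 muln1; congr addn.
by rewrite big_distrr; apply: eq_bigr => i _ /=; rewrite expnS mulnCA.
Qed.

Definition padd_const (c : nat) (p : Defs.npoly) : Defs.npoly :=
  if p is a :: q then a + c :: q else [:: c].

Lemma peval_padd_const c p n : peval (padd_const c p) n = c + peval p n.
Proof.
case: p => [|a p]; rewrite !peval_cons; last by rewrite addnAC addnC.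
by rewrite /peval big_ord0 muln0 !addn0.
Qed.

Lemma poly_ncfam_grow (D D' : ncfam) (c : nat) :
  poly_ncfam D -> nwit D' =1 nwit D ->
  (forall n, csize (ncirc D' n) <= csize (ncirc D n) + c) ->
  poly_ncfam D'.
Proof.
case=> p bound_p eq_wit size_le; exists (padd_const c p) => n.
have [size_n wit_n] := bound_p n.
by rewrite peval_padd_const eq_wit; split; move: (size_le n); lia.
Qed.

Definition or_fam (A : ncfam) : ncfam :=
  NCFam (fun n => or_circ n (nwit A n) (ncirc A n)) (nwit A).

Definition nand_fam (A : ncfam) : ncfam :=
  NCFam (fun n => nand_circ n (nwit A n) (ncirc A n)) (nwit A).

Lemma poly_or_fam A : poly_ncfam A -> poly_ncfam (or_fam A).
Proof.
by move=> polyA; apply: (poly_ncfam_grow (c := 1) polyA) => // n; rewrite csize_or_circ addn1.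
Qed.

Lemma poly_nand_fam A : poly_ncfam A -> poly_ncfam (nand_fam A).
Proof.
by move=> polyA; apply: (poly_ncfam_grow (c := 2) polyA) => // n; rewrite csize_nand_circ addn2.
Qed.

(* A disjunct that does not depend on the witness can be pulled out of the
   nondeterministic quantifier (witness spaces are nonempty). *)
Lemma nd_out_or_const (D : ncfam) (n : nat) (z : seq bool)
    (t : pred ((nwit D n).-tuple bool)) (d : bool) :
  (forall w : (nwit D n).-tuple bool, cout (ncirc D n) (z ++ w) = t w || d) ->
  nd_out D n z = [exists w : (nwit D n).-tuple bool, t w] || d.
Proof.
move=> out; rewrite /nd_out (eq_existsb out); case: d {out}; last first.
  by rewrite orbF; apply: eq_existsb => w; rewrite orbF.
by rewrite orbT; apply/existsP; exists (nseq_tuple _ false); rewrite orbT.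
Qed.

Lemma nd_or_fam A n (y : seq bool) c : size y = n ->
  nd_out (or_fam A) n (y ++ [:: c]) = nd_out A n y || c.
Proof.
move=> size_y; apply: nd_out_or_const => w.
by have := or_circ_out (ncirc A n) w c size_y; rewrite size_tuple -catA.
Qed.

Lemma nd_nand_fam A n (y : seq bool) c : size y = n ->
  nd_out (nand_fam A) n (y ++ [:: c]) = ~~ cond_out A n y || ~~ c.
Proof.
move=> size_y; rewrite /cond_out negbK; apply: nd_out_or_const => w.
by have := nand_circ_out (ncirc A n) w c size_y; rewrite size_tuple -catA negb_and.
Qed.

Definition snoc_tuple n (yc : n.-tuple bool * bool) : n.+1.-tuple bool :=
  [tuple of rcons yc.1 yc.2].

Lemma take_rcons_size (y : seq bool) c n : size y = n -> take n (rcons y c) = y.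
Proof. by move=> <-; rewrite -cats1 take_size_cat. Qed.

Lemma nth_rcons_size (y : seq bool) c n : size y = n -> nth false (rcons y c) n = c.
Proof. by move=> <-; rewrite nth_rcons ltnn eqxx. Qed.

Lemma tuple_take_last n (s : n.+1.-tuple bool) :
  s = take n s ++ [:: nth false s n] :> seq bool.
Proof.
rewrite -[LHS](cat_take_drop n); congr cat.
by rewrite (drop_nth false) ?size_tuple // drop_oversize ?size_tuple.
Qed.

Lemma size_take_last n (s : n.+1.-tuple bool) : size (take n s) == n.
Proof. by rewrite size_takel ?size_tuple. Qed.

Lemma snoc_tuple_bij n : bijective (@snoc_tuple n).
Proof.
exists (fun s => (Tuple (size_take_last s), nth false s n)).
  case=> y c; congr pair; [apply: val_inj|];
  by rewrite /= ?take_rcons_size ?nth_rcons_size ?size_tuple.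
by move=> s; apply: val_inj; rewrite /= -cats1 -tuple_take_last.
Qed.

Lemma card_last_bit n (P : seq bool -> bool -> bool) :
  #|[pred s : n.+1.-tuple bool | P (take n s) (nth false s n)]| =
  #|[pred y : n.-tuple bool | P y true]| + #|[pred y : n.-tuple bool | P y false]|.
Proof.
rewrite -!sum1_card (reindex _ (onW_bij _ (snoc_tuple_bij n))) /=.
rewrite big_mkcond /=.
rewrite -(pair_bigA _ (fun y c =>
  if P (take n (snoc_tuple (y, c))) (nth false (snoc_tuple (y, c)) n) then 1 else 0)) /=.
rewrite !(big_mkcond (fun y : n.-tuple bool => P y _)) -big_split /=.
by apply: eq_bigr => y _; rewrite big_bool /= !take_rcons_size ?nth_rcons_size ?size_tuple // addnC.
Qed.

Import Order.TTheory GRing.Theory Num.Theory.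
Local Open Scope ring_scope.

Lemma prob_ext k (P Q : pred (k.-tuple bool)) : P =1 Q -> prob P = prob Q.
Proof. by move=> eqPQ; rewrite /prob (eq_card eqPQ). Qed.

Lemma two_exp_neq0 k : (2 ^ k)%:R != 0 :> rat.
Proof. by rewrite pnatr_eq0 expn_eq0. Qed.

Lemma prob_true k : prob (fun _ : k.-tuple bool => true) = 1.
Proof.
rewrite /prob (eq_card (B := [pred _ : k.-tuple bool | true])) // card_tuple card_bool.
by rewrite divff ?two_exp_neq0.
Qed.

Lemma prob_compl k (P : pred (k.-tuple bool)) : prob (fun x => ~~ P x) = 1 - prob P.
Proof.
have card_split := cardC P; rewrite card_tuple card_bool in card_split.
rewrite /prob (eq_card (B := [predC P])) // -card_split natrD.
by field; rewrite -natrD card_split two_exp_neq0.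
Qed.

Lemma prob_last_bit n (P : seq bool -> bool -> bool) :
  prob (fun s : n.+1.-tuple bool => P (take n s) (nth false s n)) =
  (prob (fun y : n.-tuple bool => P y true) + prob (fun y : n.-tuple bool => P y false)) / 2.
Proof.
rewrite /prob (card_last_bit n P) natrD expnS natrM.
by field; rewrite two_exp_neq0.
Qed.

(* A test "a(y) or (c = c0)" on a uniform string y c: the last bit settles
   the test half of the time, and otherwise a decides. *)
Lemma prob_or_last_bit n (a : pred (seq bool)) (c0 : bool) :
  prob (fun s : n.+1.-tuple bool => a (take n s) || (nth false s n == c0)) =
  (1 + prob (fun y : n.-tuple bool => a y)) / 2.
Proof.
have or_true : prob (fun y : n.-tuple bool => a y || true) = 1.
  by rewrite -(prob_true n); apply: prob_ext => y; rewrite orbT.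
have or_false : prob (fun y : n.-tuple bool => a y || false) = prob (fun y : n.-tuple bool => a y).
  by apply: prob_ext => y; rewrite orbF.
rewrite (prob_last_bit n (fun y c => a y || (c == c0))).
by case: c0 => /=; rewrite or_true or_false // addrC.
Qed.

Section SplitGenerator.
Variable g : forall n, n.-tuple bool -> n.+1.-tuple bool.
Arguments g : clear implicits.

Lemma f_of_take n (x : n.-tuple bool) : f_of g x = take n (g n x) :> seq bool.
Proof.
apply: (@eq_from_nth _ false); first by rewrite size_tuple size_take size_tuple ltnSn.
move=> i; rewrite size_tuple => lt_in.
by rewrite -[i]/(nat_of_ord (Ordinal lt_in)) -tnth_nth tnth_mktuple nth_take // (tnth_nth false).
Qed.

Lemma g_split n (x : n.-tuple bool) : g n x = f_of g x ++ [:: b_of g x] :> seq bool.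
Proof. by rewrite f_of_take /b_of (tnth_nth false) -tuple_take_last. Qed.

(* f and b are computed by the circuits of g with some outputs dropped. *)
Lemma f_of_computable :
  poly_computable id S g -> poly_computable id id (f_of g).
Proof.
case=> C [size_C comp_C].
exists (fun n => Circuit (gates (C n)) (take n (outs (C n)))); split => // n x.
by rewrite -[RHS]/(f_of g x : seq bool) f_of_take -comp_C /ceval /= map_take.
Qed.

Lemma b_of_computable : poly_computable id S g -> poly_computable_pred id (b_of g).
Proof.
case=> C [size_C comp_C].
exists (fun n => Circuit (gates (C n)) [:: nth 0%N (outs (C n)) n]); split => // n x.
have size_outs : size (outs (C n)) = n.+1.
  by rewrite -(size_map (nth false (wires (C n) x))) -/(ceval _ _) comp_C size_tuple.
rewrite /cout /ceval /= -(nth_map 0%N false) ?size_outs //.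
by rewrite -/(ceval (C n) x) comp_C /b_of (tnth_nth false).
Qed.

(* The distinguishing advantage of a test of the form "a(y) or c = c0" on a
   string y c is exactly the quantity bounded in the definition of a super-core. *)
Lemma distinguisher_gap (D : ncfam) (a : pred (seq bool)) (c0 : bool) n :
  (forall y c, size y = n -> nd_out D n (y ++ [:: c]) = a y || (c == c0)) ->
  prob (fun y : n.+1.-tuple bool => nd_out D n y)
    - prob (fun x : n.-tuple bool => nd_out D n (g n x)) =
  prob (fun x : n.-tuple bool => ~~ a (f_of g x) && (b_of g x != c0))
    + 1 / 2 * prob (fun y : n.-tuple bool => a y) - 1 / 2.
Proof.
move=> D_or.
rewrite (@prob_ext n.+1 (fun s => nd_out D n s)
  (fun s => a (take n s) || (nth false s n == c0))).
rewrite (@prob_ext n (fun x => nd_out D n (g n x))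
  (fun x => ~~ (~~ a (f_of g x) && (b_of g x != c0)))).
- by rewrite prob_or_last_bit prob_compl; field.
- by move=> x; rewrite g_split D_or ?size_tuple // negb_and !negbK.
by move=> s; rewrite {1}tuple_take_last D_or // size_takel ?size_tuple.
Qed.

Lemma or_fam_gap (A : ncfam) n :
  prob (fun y : n.+1.-tuple bool => nd_out (or_fam A) n y)
    - prob (fun x : n.-tuple bool => nd_out (or_fam A) n (g n x)) =
  prob (fun x : n.-tuple bool => ~~ nd_out A n (f_of g x) && ~~ b_of g x)
    + 1 / 2 * prob (fun y : n.-tuple bool => nd_out A n y) - 1 / 2.
Proof.
rewrite (@distinguisher_gap _ (nd_out A n) true) => [|y c size_y].
  by congr (_ + _ - _); apply: prob_ext => x; rewrite eqb_id.
by rewrite nd_or_fam // eqb_id.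
Qed.

Lemma nand_fam_gap (A : ncfam) n :
  prob (fun y : n.+1.-tuple bool => nd_out (nand_fam A) n y)
    - prob (fun x : n.-tuple bool => nd_out (nand_fam A) n (g n x)) =
  prob (fun x : n.-tuple bool => cond_out A n (f_of g x) && b_of g x)
    + 1 / 2 * prob (fun y : n.-tuple bool => ~~ cond_out A n y) - 1 / 2.
Proof.
rewrite (@distinguisher_gap _ (fun y => ~~ cond_out A n y) false) => [|y c size_y].
  by congr (_ + _ - _); apply: prob_ext => x; rewrite eqbF_neg !negbK.
by rewrite nd_nand_fam // eqbF_neg.
Qed.

End SplitGenerator.

Theorem proposition6p4 (g : forall n, n.-tuple bool -> n.+1.-tuple bool) :
  super_bit g ->
  super_core (fun n => n) (f_of g) (b_of g) /\
  poly_computable (fun n => n) (fun n => n) (f_of g).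
Proof.
case=> g_comp g_secure; split; last exact: f_of_computable.
split; first exact: b_of_computable.
case=> A1 [A2 [p [polyA1 polyA2 p_nz breaks]]].
have [N1 or_secure] := g_secure _ (poly_or_fam polyA1) p p_nz.
have [N2 nand_secure] := g_secure _ (poly_nand_fam polyA2) p p_nz.
have [n [le_Nn [adv1 | adv2]]] := breaks (maxn N1 N2).
- have := or_secure n (leq_trans (leq_maxl _ _) le_Nn).
  by rewrite or_fam_gap; move: adv1; lra.
- have := nand_secure n (leq_trans (leq_maxr _ _) le_Nn).
  by rewrite nand_fam_gap; move: adv2; lra.
Qed.
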